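(* Let $p,q$ be positive integers with $2\le p/q<4$, let $G$ be a graph and $f$ a $(p,q)$-colouring of $G$, and let $f'$ be the $(p,q)$-colouring obtained from $f$ by recolouring a vertex set $X$ by $1$ (i.e. $f'(v)\equiv f(v)+1\pmod p$ for $v\in X$, $f'(v)=f(v)$ otherwise, and $f'$ is assumed to be a $(p,q)$-colouring). Then $f'$ can be obtained from $f$ by a sequence of recolourings of single vertices, in which every intermediate map is a $(p,q)$-colouring, if and only if the induced subdigraph $D_f[X]$ contains no directed cycle.
   Context: A $(p,q)$-colouring of $G$ is a map $f:V(G)\to\{0,\dots,p-1\}$ with $q\le|f(u)-f(v)|\le p-q$ for every edge $uv$. $D_f$ is the digraph on $V(G)$ with an arc $\overrightarrow{xy}$ whenever $xy\in E(G)$ and $f(y)-f(x)\equiv q\pmod p$ (so when $p=2q$ every edge of $G$ gives arcs in both directions, i.e. a directed 2-cycle). Directed cycles include directed 2-cycles. *)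

From mathcomp Require Import all_boot.
From Stdlib Require Import Relations.
Set Implicit Arguments. Unset Strict Implicit. Unset Printing Implicit Defensive.

Section Defs.
Variable T : finType.

Definition natdist (m n : nat) : nat := (m - n) + (n - m).

Definition pq_colouring (e : rel T) (p q : nat) (f : T -> nat) : Prop :=
  (forall v, f v < p) /\
  (forall u v, e u v -> q <= natdist (f u) (f v) <= p - q).

Definition Darc (e : rel T) (p q : nat) (f : T -> nat) : rel T :=
  fun x y => e x y && (f y == f x + q %[mod p]).

(* D_f[X] contains a directed cycle (directed 2-cycles allowed):
   distinct vertices x_0,...,x_{k-1} of X, k >= 2, with arcs x_i -> x_{i+1 mod k} *)
Definition has_dicycle_in (e : rel T) (p q : nat) (f : T -> nat) (X : {set T}) : Prop :=
  exists s : seq T, [/\ 2 <= size s, uniq s, all (fun x => x \in X) s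
                     & cycle (Darc e p q f) s].

Definition recolour_by1 (p : nat) (f : T -> nat) (X : {set T}) : T -> nat :=
  fun v => if v \in X then (f v + 1) %% p else f v.

Definition recol_step (e : rel T) (p q : nat) (g h : T -> nat) : Prop :=
  pq_colouring e p q g /\ pq_colouring e p q h /\
  exists v : T, forall w, w != v -> g w = h w.

Definition reconfigurable (e : rel T) (p q : nat) : relation (T -> nat) :=
  clos_refl_trans (T -> nat) (recol_step e p q).

End Defs.

(* If D_f[X] has a directed cycle x_0 -> ... -> x_{k-1} -> x_0, then as long as
   its neighbours keep their colours, each x_i is pinned between an in-neighbour
   coloured q below it and an out-neighbour coloured q above it (mod p); since
   p < 4q no other colour is at distance at least q from both, so no single
   recolouring can ever move the first vertex of the cycle, whereas f' changes it.
   Conversely, if D_f[X] is acyclic it has a sink x; the only colour forbidden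
   for x + 1 by a neighbour in X would sit exactly q above f(x), i.e. would be an
   arc out of x, and neighbours outside X are harmless because f' is a colouring.
   So x can be recoloured first, and induction on |X| recolours the rest. *)
From Stdlib Require Import Relations FunctionalExtensionality.
From mathcomp Require Import all_boot zify.

Set Implicit Arguments.
Unset Strict Implicit.
Unset Printing Implicit Defensive.

Lemma natdistC m n : natdist m n = natdist n m.
Proof. by rewrite /natdist addnC. Qed.

Lemma modn_lt_double p x :
  x < p.*2 -> x %% p = if x < p then x else x - p.
Proof.
move=> x_lt; case: ltnP => [|p_le]; first exact: modn_small.
by rewrite -{1}(subnK p_le) modnDr modn_small //; lia.
Qed.

Section ColourArithmetic.
Variables p q : nat.
Hypotheses (q_gt0 : 0 < q) (two_q_le : 2 * q <= p).

Lemma colour_forced_between a b c d : p < 4 * q ->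
  a < p -> b < p -> c < p -> d < p ->
  b = a + q %[mod p] -> a = d + q %[mod p] ->
  q <= natdist c b <= p - q -> q <= natdist d c <= p - q -> c = a.
Proof.
move=> lt4 ap bp cp dp; rewrite !modn_lt_double; try lia.
rewrite /natdist; repeat case: ifP; lia.
Qed.

Lemma colour_incr_edge a b : a < p -> b < p ->
  q <= natdist a b <= p - q -> b != a + q %[mod p] ->
  q <= natdist ((a + 1) %% p) b <= p - q.
Proof.
move=> ap bp; rewrite !modn_lt_double; try lia.
rewrite /natdist; repeat case: ifP; lia.
Qed.

End ColourArithmetic.

Section Reconfiguration.
Variables (T : finType) (e : rel T) (p q : nat).
Hypotheses (e_irr : irreflexive e) (q_gt0 : 0 < q) (two_q_le : 2 * q <= p).

Section FrozenDicycle.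
Hypothesis lt_four_q : p < 4 * q.
Variables (f : T -> nat) (s : seq T).
Hypothesis s_cycle : cycle (Darc e p q f) s.

Lemma recol_step_fixes_dicycle g h : recol_step e p q g h ->
  {in s, g =1 f} -> {in s, h =1 f}.
Proof.
move=> [[gp _] [[hp he] [w hw]]] gs v vs.
have [vw|vw] := eqVneq v w; last by rewrite -hw // gs.
subst w.
have /andP[e_vy /eqP Dy] := next_cycle s_cycle vs.
have /andP[e_zv /eqP Dz] := prev_cycle s_cycle vs.
have edge_neq u w : e u w -> u != w.
  by move=> euw; apply/eqP=> uw; move: euw; rewrite uw e_irr.
have fixed y : y \in s -> y != v -> h y = f y by move=> ys yv; rewrite -hw ?gs.
have next_fixed : h (next s v) = f (next s v).
  by rewrite fixed ?mem_next // eq_sym edge_neq.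
have prev_fixed : h (prev s v) = f (prev s v).
  by rewrite fixed ?mem_prev // edge_neq.
apply: (colour_forced_between q_gt0 two_q_le lt_four_q _ _ _ _ Dy Dz).
- by rewrite -gs.
- by rewrite -gs ?mem_next.
- exact: hp.
- by rewrite -gs ?mem_prev.
- by rewrite -next_fixed he.
- by rewrite -prev_fixed he.
Qed.

Lemma reconfigurable_fixes_dicycle g h : reconfigurable e p q g h ->
  {in s, g =1 f} -> {in s, h =1 f}.
Proof.
elim=> {g h} [g h|//|g h k _ IHgh _ IHhk gs]; last exact: IHhk (IHgh gs).
exact: recol_step_fixes_dicycle.
Qed.

End FrozenDicycle.

Lemma Darc_dicycle_of_connect f (X : {set T}) x y :
  let r := [rel u v | [&& u \in X, v \in X & Darc e p q f u v]] in
  r x y -> connect r y x -> has_dicycle_in e p q f X.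
Proof.
move=> r rxy /connectP[c c_path].
case: (shortenP c_path) => c' c'_path c'_uniq _ c'_last.
have c'_cycle : cycle r (y :: c') by rewrite /= rcons_path c'_path -c'_last.
exists (y :: c'); split=> //.
- case: c' {c'_path c'_uniq c'_cycle} c'_last => //= yx.
  by move: rxy; rewrite -yx => /and3P[_ _ /andP[]]; rewrite e_irr.
- by apply/allP=> z zs; case/and3P: (next_cycle c'_cycle zs).
- by apply: sub_cycle c'_cycle => u v /and3P[].
Qed.

Lemma acyclic_has_sink f (X : {set T}) x0 : x0 \in X ->
  ~ has_dicycle_in e p q f X ->
  exists2 x, x \in X & forall y, y \in X -> ~~ Darc e p q f x y.
Proof.
move=> x0X acyclic.
pose r := [rel u v | [&& u \in X, v \in X & Darc e p q f u v]].
pose reach x := #|[set y | connect r x y]|.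
have [x xX x_min] := arg_minnP reach x0X.
exists x => // y yX; apply/negP=> Dxy.
have rxy : r x y by apply/and3P.
have yx_unreachable : ~~ connect r y x.
  by apply/negP=> /(Darc_dicycle_of_connect rxy)/acyclic.
suff : reach y < reach x by rewrite ltnNge x_min.
apply: proper_card; rewrite properE; apply/andP; split.
  apply/subsetP=> z; rewrite !inE; apply: connect_trans.
  exact: connect1.
by apply/subsetPn; exists x; rewrite inE ?connect0.
Qed.

Lemma recolour_by1_setD1 f (X : {set T}) x : x \in X ->
  recolour_by1 p (recolour_by1 p f [set x]) (X :\ x) = recolour_by1 p f X.
Proof.
move=> xX; apply: functional_extensionality => v; rewrite /recolour_by1 !inE.
by case: eqVneq => [->|]; rewrite ?xX.
Qed.

Lemma has_dicycle_in_recolour_sink f (X : {set T}) x :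
  has_dicycle_in e p q (recolour_by1 p f [set x]) (X :\ x) ->
  has_dicycle_in e p q f X.
Proof.
move=> [s [s_size s_uniq sX s_cycle]]; exists s; split=> //.
  by apply: sub_all sX => z; rewrite inE => /andP[].
rewrite (@eq_in_cycle _ (mem (X :\ x)) _ (Darc e p q (recolour_by1 p f [set x]))) //.
move=> u v; rewrite !inE /Darc /recolour_by1 !inE.
by move=> /andP[/negbTE-> _] /andP[/negbTE-> _].
Qed.

Lemma recolour_sink_colouring f (X : {set T}) x : symmetric e ->
  pq_colouring e p q f -> pq_colouring e p q (recolour_by1 p f X) ->
  x \in X -> (forall y, y \in X -> ~~ Darc e p q f x y) ->
  pq_colouring e p q (recolour_by1 p f [set x]).
Proof.
move=> e_sym fc fc' xX x_sink; have [fp fe] := fc.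
have p_gt0 : 0 < p by lia.
rewrite /pq_colouring /recolour_by1; split=> [v|].
  by case: ifP => _; rewrite ?ltn_pmod.
have incr_ok y : e x y -> q <= natdist ((f x + 1) %% p) (f y) <= p - q.
  move=> exy; case yX: (y \in X); last first.
    by have := fc'.2 _ _ exy; rewrite /recolour_by1 xX yX.
  apply: colour_incr_edge => //; first exact: fe.
  by have := x_sink _ yX; rewrite /Darc exy.
move=> u v euv; rewrite !inE.
case: (eqVneq u x) euv => [-> | ux] euv; case: (eqVneq v x) euv => [-> | vx] euv.
- by rewrite e_irr in euv.
- exact: incr_ok.
- by rewrite natdistC incr_ok // e_sym.
- exact: fe.
Qed.

Lemma reconfigurable_of_acyclic f (X : {set T}) : symmetric e ->
  pq_colouring e p q f -> pq_colouring e p q (recolour_by1 p f X) ->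
  ~ has_dicycle_in e p q f X -> reconfigurable e p q f (recolour_by1 p f X).
Proof.
move=> e_sym; move: {2}#|X| (erefl #|X|) => n; elim: n f X => [|n IHn] f X.
  move/eqP; rewrite cards_eq0 => /eqP -> _ _ _.
  suff -> : recolour_by1 p f set0 = f by apply: rt_refl.
  by apply: functional_extensionality => v; rewrite /recolour_by1 inE.
move=> Xsize fc fc' acyclic.
have [x0 x0X] : exists x, x \in X by apply/set0Pn; rewrite -card_gt0 Xsize.
have [x xX x_sink] := acyclic_has_sink x0X acyclic.
have f1c := recolour_sink_colouring e_sym fc fc' xX x_sink.
apply: rt_trans (rt_step _ _ _ _ _) _.
  split; [exact: fc | split; first exact: f1c].
  by exists x => w wx; rewrite /recolour_by1 inE (negbTE wx).
rewrite -(recolour_by1_setD1 _ xX); apply: IHn => //.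
- by move: Xsize; rewrite (cardsD1 x X) xX => -[].
- by rewrite recolour_by1_setD1.
- by move/has_dicycle_in_recolour_sink.
Qed.

End Reconfiguration.

Theorem lemma2p7 (T : finType) (e : rel T) (p q : nat) (f : T -> nat) (X : {set T}) :
  symmetric e -> irreflexive e ->
  0 < q -> 2 * q <= p -> p < 4 * q ->
  pq_colouring e p q f ->
  pq_colouring e p q (recolour_by1 p f X) ->
  (reconfigurable e p q f (recolour_by1 p f X) <-> ~ has_dicycle_in e p q f X).
Proof.
move=> e_sym e_irr q_gt0 two_q_le lt_four_q fc fc'; split; last first.
  exact: reconfigurable_of_acyclic.
move=> reconf [[|x s] []] //= _ _ /andP[xX _] s_cycle.
have := reconfigurable_fixes_dicycle (s := x :: s) e_irr q_gt0 two_q_le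
  lt_four_q s_cycle reconf (fun _ _ => erefl) (mem_head x s).
have fx_lt : f x < p := fc.1 x.
rewrite /recolour_by1 xX modn_lt_double; last lia.
by case: ifP; lia.
Qed.
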